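(* Let $N$ firms have outputs $x_i\in K_i\subseteq[0,\infty)$, $K=\prod_iK_i$, $X=\sum_{i=1}^Nx_i$, let $b^*>0$, $\sigma>1$, and for a parameter $\theta=a\in\Theta$ define $F(x;\theta)$ by $F_i(x;\theta)=c_i'(x_i)-(\theta-b^*X^\sigma)+\sigma b^*X^{\sigma-1}x_i$. Suppose each $c_i$ is convex and continuously differentiable with $c_i'$ Lipschitz continuous on $K_i$, each $K_i$ is nonempty, closed, convex and bounded, $\Theta=[\delta,\Delta]$ with $0<\delta<\Delta$, and $X\ge\eta$ for some $\eta>0$ and all $x\in K$. If $N<\frac{3\sigma-1}{\sigma-1}$, then: (a) if $x(\theta)$ denotes the solution of VI$(K,F(\cdot;\theta))$, then $x(\theta)$ is Lipschitz continuous in $\theta$ on $\Theta$; (b) for $\epsilon>0$, if $x(\theta,\epsilon)$ denotes the solution of VI$(K,F(\cdot;\theta)+\epsilon\mathbf{I})$, then $x(\theta,\epsilon)$ is Lipschitz continuous in $\theta$ and $\epsilon$.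
   Context: VI$(K,G)$ asks for $x\in K$ with $(y-x)^TG(x)\ge0$ for all $y\in K$. $F(\cdot;\theta)+\epsilon\mathbf{I}$ denotes $x\mapsto F(x;\theta)+\epsilon x$. $F(\cdot;\theta)$ is the gradient map of the Cournot game with price $\theta-b^*X^\sigma$ in which firm $i$ minimizes $c_i(x_i)-(\theta-b^*X^\sigma)x_i$; here the intercept $a=\theta$ is the parameter. *)

From mathcomp Require Import all_boot all_order all_algebra.
From mathcomp Require Import all_classical all_reals all_analysis.
Set Implicit Arguments. Unset Strict Implicit. Unset Printing Implicit Defensive.
Import Order.TTheory GRing.Theory Num.Theory numFieldNormedType.Exports.
Local Open Scope classical_set_scope.
Local Open Scope ring_scope.

Section CournotDefs.
Variable R : realType.
Variable N : nat.

Definition profile := 'I_N -> R.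

Definition total_output (x : profile) : R := \sum_(i < N) x i.

Definition in_prod (K : 'I_N -> set R) (x : profile) : Prop := forall i, K i (x i).

Definition convex_subset (A : set R) : Prop :=
  forall s t l, A s -> A t -> 0 <= l -> l <= 1 -> A (l * s + (1 - l) * t).

Definition convex_on (A : set R) (f : R -> R) : Prop :=
  forall s t l, A s -> A t -> 0 <= l -> l <= 1 ->
    f (l * s + (1 - l) * t) <= l * f s + (1 - l) * f t.

Definition bounded_subset (A : set R) : Prop :=
  exists M : R, forall t, A t -> `|t| <= M.

Definition lipschitz_on_set (A : set R) (f : R -> R) : Prop :=
  exists L : R, forall s t, A s -> A t -> `|f s - f t| <= L * `|s - t|.

Definition cournotF (dc : 'I_N -> R -> R) (b sigma theta : R) (x : profile) : profile :=
  fun i => dc i (x i) - (theta - b * (total_output x) `^ sigma)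
           + sigma * b * (total_output x) `^ (sigma - 1) * x i.

Definition add_eps_id (G : profile -> profile) (eps : R) : profile -> profile :=
  fun x i => G x i + eps * x i.

Definition solves_VI (K : 'I_N -> set R) (G : profile -> profile) (x : profile) : Prop :=
  in_prod K x /\ forall y, in_prod K y -> 0 <= \sum_(i < N) (y i - x i) * G x i.

(* l1 distance between profiles (any norm on R^N gives the same notion of Lipschitz) *)
Definition pdist (x y : profile) : R := \sum_(i < N) `|x i - y i|.

End CournotDefs.

(* Write X for the total output. Then F(x; theta) + eps x is aggregative,
   F_i = g_i(X, x_i) with
     g_i(X, t) = c_i'(t) - theta + b X^sigma + (sigma b X^(sigma-1) + eps) t,
   which, since X >= eta and t >= 0, is strongly increasing in t with modulus
   m = sigma b eta^(sigma-1) and nondecreasing in X.  Compare two solutions x, x'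
   with total outputs X >= X': the VI condition of each player i gives
   m (x_i - x'_i) <= sup_t |g_i - g'_i|, and summing with
   sum_i (x_i - x'_i) = X - X' >= 0 bounds m |x - x'|_1 by twice the sum of
   these perturbations, which are O(|theta - theta'| + |eps - eps'|).  This gives
   uniqueness and Lipschitz continuity at once.  For existence, each player's best
   response r_i(X) to a fixed aggregate is a one-dimensional VI, solved by the
   intermediate value theorem and continuous in X; a second application of the
   intermediate value theorem yields X with sum_i r_i(X) = X.
   The monotonicity of F. *)

From mathcomp Require Import all_boot all_order all_algebra.
From mathcomp Require Import all_classical all_reals all_analysis.
From mathcomp Require Import ring lra.
Import Order.TTheory GRing.Theory Num.Theory numFieldNormedType.Exports.
Set Implicit Arguments. Unset Strict Implicit. Unset Printing Implicit Defensive.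
Local Open Scope classical_set_scope.
Local Open Scope ring_scope.

Section RealAnalysis.
Variable R : realType.
Implicit Types (A : set R) (f : R -> R).

Lemma closed_convex_bounded_itv A : A !=set0 -> closed A -> convex_subset A ->
  bounded_subset A -> exists l u, l <= u /\ forall t, A t <-> l <= t <= u.
Proof.
move=> A0 A_closed A_cvx [M A_le_M].
have ubA : has_ubound A.
  by exists M => t At; apply: le_trans (A_le_M t At); exact: ler_norm.
have lbA : has_lbound A.
  exists (- M) => t At; rewrite lerNl; apply: le_trans (A_le_M t At).
  by rewrite -normrN ler_norm.
have A_sup : A (sup A) by apply: A_closed; exact: closure_sup.
have A_inf : A (inf A).
  by apply: (itv_closed_infimums A0 A_closed); split=> [|y]; [exact: ge_inf|exact: lb_le_inf].
have le_sup t : A t -> t <= sup A by exact: sup_upper_bound.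
have inf_le t : A t -> inf A <= t by exact: ge_inf.
have [t0 At0] := A0.
exists (inf A), (sup A); split; first exact: le_trans (inf_le _ At0) (le_sup _ At0).
move=> t; split=> [At|/andP[inf_t t_sup]]; first by rewrite inf_le ?le_sup.
have [sup_inf|sup_neq_inf] := eqVneq (sup A) (inf A).
  suff -> : t = inf A by [].
  by apply/eqP; rewrite eq_le inf_t andbT -sup_inf.
have len_gt0 : 0 < sup A - inf A.
  by rewrite subr_gt0 lt_def sup_neq_inf (le_trans inf_t t_sup).
pose lam := (t - inf A) / (sup A - inf A).
have -> : t = lam * sup A + (1 - lam) * inf A by rewrite /lam; field; exact: lt0r_neq0.
apply: (A_cvx (sup A) (inf A) lam) => //.
  by apply: divr_ge0; [rewrite subr_ge0 | exact: ltW].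
by rewrite /lam ler_pdivrMr // mul1r lerD2r.
Qed.

Lemma continuous_at_of_dist_le f h x0 : {for x0, continuous h} -> h x0 = 0 ->
  (forall x, `|f x - f x0| <= h x) -> {for x0, continuous f}.
Proof.
move=> h_cont hx0 f_le_h; apply/cvgrPdist_lt => e e_gt0.
move/cvgrPdist_lt: h_cont => /(_ e e_gt0); apply: filterS => x.
rewrite hx0 sub0r normrN distrC => h_lt.
exact: le_lt_trans (f_le_h x) (le_lt_trans (ler_norm _) h_lt).
Qed.

Lemma continuous_sum_at (I : Type) (r : seq I) (F : I -> R -> R) x :
  (forall i, {for x, continuous (F i)}) ->
  {for x, continuous (fun y => \sum_(i <- r) F i y)}.
Proof.
move=> F_cont; elim: r => [|i r IHr].
  have -> : (fun y => \sum_(i <- [::]) F i y) = cst 0 by apply/funext => y; rewrite big_nil.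
  exact: cvg_cst.
have -> : (fun y => \sum_(j <- i :: r) F j y) = F i \+ (fun y => \sum_(j <- r) F j y).
  by apply/funext => y; rewrite big_cons.
exact: (cvgD (F_cont i) IHr).
Qed.

Lemma continuous_powR_at (p x : R) : 0 < x -> {for x, continuous (fun y : R => y `^ p)}.
Proof.
move=> x_gt0; apply: differentiable_continuous; apply/derivable1_diffP.
by apply: derivable_powR; rewrite in_itv /= x_gt0.
Qed.

Let difference_quotient_cvg f x : derivable f x 1 ->
  (fun h => h^-1 * (f (h + x) - f x)) @ 0^' --> derive1 f x.
Proof.
move=> f_der; rewrite /derive1.
have -> : (fun h => h^-1 * (f (h + x) - f x)) = fun h => h^-1 *: (f (h *: 1 + x) - f x).
  by apply: funext => h; rewrite [h *: 1]mulr1.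
exact: f_der.
Qed.

Lemma derive1_le_slope_convex A f s t : convex_on A f -> A s -> A t ->
  derivable f s 1 -> s < t -> derive1 f s <= (f t - f s) / (t - s).
Proof.
move=> f_cvx As At f_der st.
have cvg_right : (fun h => h^-1 * (f (h + s) - f s)) @ 0^'+ --> derive1 f s.
  apply: cvg_trans _ (difference_quotient_cvg f_der); apply: cvg_app.
  by apply: within_subset => h /= /lt0r_neq0.
rewrite -(cvg_lim _ cvg_right) //; apply: limr_le; first by apply/cvg_ex; exists (derive1 f s).
have ts_gt0 : 0 < t - s by rewrite subr_gt0.
near=> h.
have h_gt0 : 0 < h by near: h; exact: nbhs_right_gt.
have h_lt : h < t - s by near: h; exact: nbhs_right_lt.
pose lam := h / (t - s).
have lam_ge0 : 0 <= lam by rewrite divr_ge0 // ltW.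
have lam_le1 : lam <= 1 by rewrite ler_pdivrMr // mul1r ltW.
have hs : h + s = lam * t + (1 - lam) * s by rewrite /lam; field; exact: lt0r_neq0.
have := f_cvx t s lam At As lam_ge0 lam_le1; rewrite -hs => f_le.
rewrite /= mulrC ler_pdivrMr // mulrC.
have -> : h * ((f t - f s) / (t - s)) = lam * f t + (1 - lam) * f s - f s.
  by rewrite /lam; field; exact: lt0r_neq0.
by rewrite lerD2r.
Unshelve. all: by end_near.
Qed.

Lemma slope_le_derive1_convex A f s t : convex_on A f -> A s -> A t ->
  derivable f t 1 -> s < t -> (f t - f s) / (t - s) <= derive1 f t.
Proof.
move=> f_cvx As At f_der st.
have cvg_left : (fun h => h^-1 * (f (h + t) - f t)) @ 0^'- --> derive1 f t.
  apply: cvg_trans _ (difference_quotient_cvg f_der); apply: cvg_app.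
  by apply: within_subset => h /= /ltr0_neq0.
rewrite -(cvg_lim _ cvg_left) //; apply: limr_ge; first by apply/cvg_ex; exists (derive1 f t).
have ts_gt0 : 0 < t - s by rewrite subr_gt0.
near=> h.
have h_lt0 : h < 0 by near: h; exact: nbhs_left_lt.
have h_gt : - (t - s) < h by near: h; apply: nbhs_left_gt; rewrite oppr_lt0.
pose lam := - h / (t - s).
have lam_ge0 : 0 <= lam by rewrite divr_ge0 // ?oppr_ge0 ltW.
have lam_le1 : lam <= 1 by rewrite ler_pdivrMr // mul1r lerNl ltW.
have ht : h + t = lam * s + (1 - lam) * t by rewrite /lam; field; exact: lt0r_neq0.
have := f_cvx s t lam As At lam_ge0 lam_le1; rewrite -ht => f_le.
rewrite /= [h^-1 * _]mulrC ler_ndivlMr // mulrC.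
have -> : h * ((f t - f s) / (t - s)) = lam * f s + (1 - lam) * f t - f t.
  by rewrite /lam; field; exact: lt0r_neq0.
by rewrite lerD2r.
Unshelve. all: by end_near.
Qed.

Lemma derive1_homo_convex A f s t : convex_on A f -> (forall v, A v -> derivable f v 1) ->
  A s -> A t -> s <= t -> derive1 f s <= derive1 f t.
Proof.
move=> f_cvx f_der As At; rewrite le_eqVlt => /predU1P[-> //|st].
exact: le_trans (derive1_le_slope_convex f_cvx As At (f_der s As) st)
                (slope_le_derive1_convex f_cvx As At (f_der t At) st).
Qed.

End RealAnalysis.

Section ScalarVI.
Variable R : realType.
Implicit Types (A : set R) (phi psi : R -> R) (m t : R).

Definition solves_scalar_VI A phi t := A t /\ forall s, A s -> 0 <= (s - t) * phi t.

Definition strongly_increasing_on A m phi :=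
  forall s s', A s -> A s' -> s' <= s -> m * (s - s') <= phi s - phi s'.

Lemma scalar_VI_exists (a b : R) phi : a <= b -> {within `[a, b], continuous phi} ->
  exists t, solves_scalar_VI [set t | a <= t <= b] phi t.
Proof.
move=> ab phi_cont.
have [phi_a_ge0|phi_a_lt0] := lerP 0 (phi a).
  exists a; rewrite /solves_scalar_VI /= lexx ab; split=> // s /andP[a_s _].
  by rewrite mulr_ge0 // subr_ge0.
have [phi_b_le0|phi_b_gt0] := lerP (phi b) 0.
  exists b; rewrite /solves_scalar_VI /= lexx ab; split=> // s /andP[_ s_b].
  by rewrite mulr_le0 // subr_le0.
have phi_ab : Num.min (phi a) (phi b) <= 0 <= Num.max (phi a) (phi b).
  by rewrite ge_min le_max (ltW phi_a_lt0) (ltW phi_b_gt0) orbT.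
have [t + phi_t0] := IVT ab phi_cont phi_ab; rewrite in_itv /= => t_ab.
by exists t; split=> // s _; rewrite phi_t0 mulr0.
Qed.

Lemma scalar_VI_lt A phi psi m t t' :
  solves_scalar_VI A phi t -> solves_scalar_VI A psi t' ->
  strongly_increasing_on A m phi -> t' < t -> m * (t - t') <= psi t' - phi t'.
Proof.
move=> [At VIt] [At' VIt'] phi_incr t't.
have tt'_gt0 : 0 < t - t' by rewrite subr_gt0.
have phi_t_le0 : phi t <= 0.
  by move: (VIt t' At'); rewrite -opprB mulNr oppr_ge0 pmulr_rle0.
have psi_t'_ge0 : 0 <= psi t' by move: (VIt' t At); rewrite pmulr_rge0.
have := phi_incr t t' At At' (ltW t't); lra.
Qed.

Lemma scalar_VI_dist A phi psi m (E : R) t t' :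
  solves_scalar_VI A phi t -> solves_scalar_VI A psi t' ->
  strongly_increasing_on A m phi -> strongly_increasing_on A m psi ->
  (forall s, A s -> `|phi s - psi s| <= E) -> m * `|t - t'| <= E.
Proof.
move=> VIt VIt' phi_incr psi_incr phi_psi_le.
have [At At'] := (VIt.1, VIt'.1).
have [tt'|t't|<-] := ltgtP t t'.
- rewrite distrC gtr0_norm ?subr_gt0 //.
  apply: le_trans (scalar_VI_lt VIt' VIt psi_incr tt') _.
  exact: le_trans (ler_norm _) (phi_psi_le t At).
- rewrite gtr0_norm ?subr_gt0 //.
  apply: le_trans (scalar_VI_lt VIt VIt' phi_incr t't) _.
  have := phi_psi_le t' At'; rewrite distrC; exact: le_trans (ler_norm _).
- by rewrite subrr normr0 mulr0; exact: le_trans (phi_psi_le t At).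
Qed.

End ScalarVI.

Section AggregativeVI.
Variables (R : realType) (N : nat).
Implicit Types (K : 'I_N -> set R) (g : 'I_N -> R -> R -> R) (x y : profile R N).

Definition box (l u : 'I_N -> R) i : set R := [set t | l i <= t <= u i].

Definition aggregative g : profile R N -> profile R N :=
  fun x i => g i (total_output x) (x i).

Definition aggregative_monotone K (eta m : R) g :=
  (forall i X, eta <= X -> strongly_increasing_on (K i) m (g i X)) /\
  (forall i X X' t, eta <= X' -> X' <= X -> K i t -> g i X' t <= g i X t).

Lemma box_of_closed_convex_bounded K : (forall i, K i !=set0) ->
  (forall i, closed (K i)) -> (forall i, convex_subset (K i)) ->
  (forall i, bounded_subset (K i)) -> exists l u, (forall i, l i <= u i) /\ K = box l u.
Proof.
move=> Kne Kcl Kcvx Kbd.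
have /choice[lu lu_itv] i : exists p : R * R, p.1 <= p.2 /\ forall t, K i t <-> p.1 <= t <= p.2.
  have [l [u]] := closed_convex_bounded_itv (Kne i) (Kcl i) (Kcvx i) (Kbd i).
  by exists (l, u).
exists (fst \o lu), (snd \o lu); split=> [i|]; first exact: (lu_itv i).1.
by apply/funext => i; rewrite predeqE; exact: (lu_itv i).2.
Qed.

Lemma pdistC x y : pdist x y = pdist y x.
Proof. by apply: eq_bigr => i _; rewrite distrC. Qed.

Lemma pdist_le0 x y : pdist x y <= 0 -> x = y.
Proof.
move=> xy_le0; have /eqP : pdist x y = 0 by apply/eqP; rewrite eq_le xy_le0 sumr_ge0.
rewrite psumr_eq0 // => /allP xy0; apply: funext => i; apply/eqP.
by rewrite -subr_eq0 -normr_eq0; exact: implyP (xy0 i (mem_index_enum _)) isT.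
Qed.

Lemma aggregative_VIP K g x : solves_VI K (aggregative g) x <->
  forall i, solves_scalar_VI (K i) (g i (total_output x)) (x i).
Proof.
split=> [[Kx VIx] i|VIx].
  split=> [|s Ks]; first exact: Kx.
  pose y j := if j == i then s else x j.
  have Ky : in_prod K y by move=> j; rewrite /y; case: eqP => [->|].
  have := VIx y Ky; rewrite (bigD1 i) //= big1 ?addr0 /y ?eqxx //.
  by move=> j /negPf ->; rewrite subrr mul0r.
split=> [i|y Ky]; first exact: (VIx i).1.
by apply: sumr_ge0 => i _; exact: (VIx i).2.
Qed.

Lemma aggregative_VI_stability_le K g1 g2 (eta m : R) (D : 'I_N -> R) x x' :
  (forall x, in_prod K x -> eta <= total_output x) -> 0 <= m ->
  aggregative_monotone K eta m g1 ->
  (forall i X t, K i t -> `|g1 i X t - g2 i X t| <= D i) ->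
  solves_VI K (aggregative g1) x -> solves_VI K (aggregative g2) x' ->
  total_output x' <= total_output x -> m * pdist x x' <= 2 * \sum_i D i.
Proof.
move=> eta_le m_ge0 [g1_incr g1_nondecr] g12_le VIx VIx' X'X.
have [Kx Kx'] := (VIx.1, VIx'.1).
move/aggregative_VIP: VIx => VIx; move/aggregative_VIP: VIx' => VIx'.
set X := total_output x in X'X VIx *; set X' := total_output x' in X'X VIx' *.
have D_ge0 i : 0 <= D i by exact: le_trans (normr_ge0 _) (g12_le i X _ (Kx' i)).
have coord_le i : m * (x i - x' i) <= D i.
  have [x'x|xx'] := ltP (x' i) (x i); last first.
    by apply: le_trans (D_ge0 i); rewrite mulr_ge0_le0 // subr_le0.
  have := scalar_VI_lt (VIx i) (VIx' i) (g1_incr i X (eta_le x Kx)) x'x.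
  have := g1_nondecr i X X' (x' i) (eta_le x' Kx') X'X (Kx' i).
  have := g12_le i X' (x' i) (Kx' i); rewrite distrC => /(le_trans (ler_norm _)).
  lra.
have abs_le i : m * `|x i - x' i| <= 2 * D i - m * (x i - x' i).
  have := coord_le i; have := D_ge0 i.
  by have [?|?] := lerP 0 (x i - x' i); [rewrite ger0_norm | rewrite ltr0_norm]; lra.
rewrite /pdist mulr_sumr; apply: le_trans (ler_sum _ (fun i _ => abs_le i)) _.
rewrite sumrB -!mulr_sumr sumrB -[\sum_(i < N) x i]/X -[\sum_(i < N) x' i]/X'.
have : 0 <= m * (X - X') by rewrite mulr_ge0 // subr_ge0.
lra.
Qed.

Lemma aggregative_VI_stability K g1 g2 (eta m : R) (D : 'I_N -> R) x x' :
  (forall x, in_prod K x -> eta <= total_output x) -> 0 <= m ->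
  aggregative_monotone K eta m g1 -> aggregative_monotone K eta m g2 ->
  (forall i X t, K i t -> `|g1 i X t - g2 i X t| <= D i) ->
  solves_VI K (aggregative g1) x -> solves_VI K (aggregative g2) x' ->
  m * pdist x x' <= 2 * \sum_i D i.
Proof.
move=> eta_le m_ge0 g1_mono g2_mono g12_le VIx VIx'.
have [X'X|XX'] := lerP (total_output x') (total_output x).
  exact: aggregative_VI_stability_le g1_mono g12_le VIx VIx' X'X.
rewrite pdistC; apply: aggregative_VI_stability_le g2_mono _ VIx' VIx (ltW XX') => //.
by move=> i X t Kt; rewrite distrC; exact: g12_le.
Qed.

End AggregativeVI.

Section AggregativeExistence.
Variables (R : realType) (N : nat) (l u : 'I_N -> R) (g : 'I_N -> R -> R -> R) (m : R).
Let Lt := \sum_(i < N) l i.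
Let Ut := \sum_(i < N) u i.
Hypotheses (lu : forall i, l i <= u i) (m_gt0 : 0 < m).
Hypothesis g_cont :
  forall i X, Lt <= X <= Ut -> {within `[l i, u i], continuous (g i X)}.
Hypothesis g_incr :
  forall i X, Lt <= X <= Ut -> strongly_increasing_on (box l u i) m (g i X).
Hypothesis g_equicont : forall i X0, Lt <= X0 <= Ut ->
  exists w : R -> R, [/\ {for X0, continuous w}, w X0 = 0 &
    forall X t, Lt <= X <= Ut -> box l u i t -> `|g i X t - g i X0 t| <= w X].

Let Lt_le_Ut : Lt <= Ut. Proof. by apply: ler_sum => i _; exact: lu. Qed.

Let clamp (X : R) : R := Num.min (Num.max X Lt) Ut.

Let clamp_itv X : Lt <= clamp X <= Ut.
Proof. by rewrite le_min le_max lexx orbT Lt_le_Ut ge_min lexx orbT. Qed.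

Let clamp_id X : Lt <= X <= Ut -> clamp X = X.
Proof. by move=> /andP[LtX XUt]; rewrite /clamp max_l // min_l. Qed.

Let clamp_continuous X : {for X, continuous clamp}.
Proof.
apply: continuous_min; last exact: cvg_cst.
by apply: continuous_max; [exact: cvg_id | exact: cvg_cst].
Qed.

(* Best response of player i to the aggregate X; clamping X into [Lt, Ut], where
   the hypotheses on g hold, makes it defined and continuous everywhere. *)
Let response i X := xget 0 (solves_scalar_VI (box l u i) (g i (clamp X))).

Let responseP i X : solves_scalar_VI (box l u i) (g i (clamp X)) (response i X).
Proof. by apply: xgetPex; apply: scalar_VI_exists; [exact: lu | exact: g_cont]. Qed.

Let response_continuous i X0 : Lt <= X0 <= Ut -> {for X0, continuous (response i)}.
Proof.
move=> X0_itv; have [w [w_cont wX0 g_le_w]] := g_equicont i X0_itv.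
have VIX0 := responseP i X0; rewrite clamp_id // in VIX0.
apply: (@continuous_at_of_dist_le _ _ (fun X => m^-1 * w (clamp X))).
- have w_clamp_cont : {for X0, continuous (w \o clamp)}.
    by apply: continuous_comp; [exact: clamp_continuous | rewrite clamp_id].
  exact: cvgM (cvg_cst _) w_clamp_cont.
- by rewrite clamp_id // wX0 mulr0.
- move=> X; rewrite ler_pdivlMl //.
  apply: (scalar_VI_dist (responseP i X) VIX0); [exact: g_incr|exact: g_incr|].
  by move=> s Bs; exact: g_le_w.
Qed.

Let excess X := \sum_(i < N) response i X - X.

Let excess_continuous : {within `[Lt, Ut], continuous excess}.
Proof.
apply: continuous_in_subspaceT => X; rewrite inE /= in_itv /= => X_itv.
apply: cvgB; last exact: cvg_id.
by apply: continuous_sum_at => i; exact: response_continuous.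
Qed.

Lemma aggregative_VI_exists : exists x, solves_VI (box l u) (aggregative g) x.
Proof.
have excess_Lt : 0 <= excess Lt.
  by rewrite subr_ge0; apply: ler_sum => i _; have [/andP[]] := responseP i Lt.
have excess_Ut : excess Ut <= 0.
  by rewrite subr_le0; apply: ler_sum => i _; have [/andP[]] := responseP i Ut.
have excess_itv : Num.min (excess Lt) (excess Ut) <= 0 <= Num.max (excess Lt) (excess Ut).
  by rewrite ge_min le_max excess_Lt excess_Ut orbT.
have [X + /eqP] := IVT Lt_le_Ut excess_continuous excess_itv.
rewrite in_itv /= subr_eq0 => X_itv /eqP total_X.
exists (response ^~ X); apply/aggregative_VIP => i.
have -> : total_output (response ^~ X) = X by [].
by rewrite -[in g i X](clamp_id X_itv); exact: responseP.
Qed.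

End AggregativeExistence.

Section CournotGame.
Variables (R : realType) (N : nat) (l u : 'I_N -> R) (c : 'I_N -> R -> R) (b sigma eta : R).
Hypotheses (lu : forall i, l i <= u i) (l_ge0 : forall i, 0 <= l i).
Hypotheses (b_gt0 : 0 < b) (sigma_gt1 : 1 < sigma) (eta_gt0 : 0 < eta).
Hypothesis eta_le : forall x, in_prod (box l u) x -> eta <= total_output x.
Hypothesis c_cvx : forall i, convex_on (box l u i) (c i).
Hypothesis c_der : forall i t, box l u i t -> derivable (c i) t 1.
Hypothesis dc_cont : forall i, {within box l u i, continuous (derive1 (c i))}.

Definition cournot_grad (theta eps : R) i (X t : R) : R :=
  derive1 (c i) t - (theta - b * X `^ sigma) + (sigma * b * X `^ (sigma - 1) + eps) * t.

Lemma add_eps_id_cournotF theta eps :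
  add_eps_id (cournotF (fun i => derive1 (c i)) b sigma theta) eps =
  aggregative (cournot_grad theta eps).
Proof.
apply/funext => x; apply/funext => i.
by rewrite /add_eps_id /cournotF /aggregative /cournot_grad; ring.
Qed.

Lemma cournotF_aggregative theta :
  cournotF (fun i => derive1 (c i)) b sigma theta = aggregative (cournot_grad theta 0).
Proof.
apply/funext => x; apply/funext => i.
by rewrite /cournotF /aggregative /cournot_grad; ring.
Qed.

Let sigma_gt0 : 0 < sigma. Proof. exact: lt_trans sigma_gt1. Qed.

Let powR_homo (p X' X : R) : 0 <= p -> 0 <= X' -> X' <= X -> X' `^ p <= X `^ p.
Proof.
move=> p_ge0 X'_ge0 X'X.
by apply: ge0_ler_powR; rewrite ?nnegrE // (le_trans X'_ge0 X'X).
Qed.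

(* The modulus of strong monotonicity in the own output provided by X >= eta. *)
Let m := sigma * b * eta `^ (sigma - 1).

Let m_gt0 : 0 < m. Proof. by rewrite !mulr_gt0 // powR_gt0. Qed.

Let u_ge0 i : 0 <= u i. Proof. exact: le_trans (l_ge0 i) (lu i). Qed.

Lemma cournot_grad_monotone theta eps : 0 <= eps ->
  aggregative_monotone (box l u) eta m (cournot_grad theta eps).
Proof.
move=> eps_ge0; split=> [i X eta_X s s' Bs Bs' s's|i X X' t eta_X' X'X /andP[lt _]].
  have dc_le := derive1_homo_convex (@c_cvx i) (@c_der i) Bs' Bs s's.
  have m_le : m <= sigma * b * X `^ (sigma - 1) + eps.
    rewrite -[m]addr0 lerD // ler_wpM2l ?mulr_ge0 ?(ltW b_gt0) ?(ltW sigma_gt0) //.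
    by apply: powR_homo; rewrite ?subr_ge0 ?(ltW sigma_gt1) ?(ltW eta_gt0).
  have : m * (s - s') <= (sigma * b * X `^ (sigma - 1) + eps) * (s - s').
    by rewrite ler_wpM2r // subr_ge0.
  rewrite /cournot_grad; lra.
have X'_ge0 : 0 <= X' := le_trans (ltW eta_gt0) eta_X'.
have t_ge0 : 0 <= t := le_trans (l_ge0 i) lt.
have pow_le := powR_homo (ltW sigma_gt0) X'_ge0 X'X.
have pow1_le : X' `^ (sigma - 1) <= X `^ (sigma - 1).
  by apply: powR_homo; rewrite // subr_ge0 ltW.
have : 0 <= b * (X `^ sigma - X' `^ sigma) by rewrite mulr_ge0 ?subr_ge0 // ltW.
have : 0 <= sigma * b * (X `^ (sigma - 1) - X' `^ (sigma - 1)) * t.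
  by rewrite !mulr_ge0 ?subr_ge0 // ltW.
rewrite /cournot_grad; lra.
Qed.

Lemma cournot_grad_perturbation theta1 theta2 eps1 eps2 i X t : box l u i t ->
  `|cournot_grad theta1 eps1 i X t - cournot_grad theta2 eps2 i X t|
    <= `|theta1 - theta2| + u i * `|eps1 - eps2|.
Proof.
move=> /andP[lt tu].
have -> : cournot_grad theta1 eps1 i X t - cournot_grad theta2 eps2 i X t =
          - (theta1 - theta2) + (eps1 - eps2) * t by rewrite /cournot_grad; ring.
apply: le_trans (ler_normD _ _) _; rewrite normrN lerD2l normrM mulrC.
by rewrite ler_wpM2r // ger0_norm // (le_trans (l_ge0 i) lt).
Qed.

Lemma cournot_grad_continuous theta eps i X :
  {within `[l i, u i], continuous (cournot_grad theta eps i X)}.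
Proof.
have -> : [set` `[l i, u i]] = box l u i by rewrite predeqE => t; rewrite /= in_itv.
pose affine t := - (theta - b * X `^ sigma) + (sigma * b * X `^ (sigma - 1) + eps) * t.
have -> : cournot_grad theta eps i X = derive1 (c i) \+ affine.
  by apply/funext => t; rewrite /cournot_grad /affine /= addrA.
have affine_cont : {within box l u i, continuous affine}.
  apply: continuous_subspaceT => t; apply: cvgD; first exact: cvg_cst.
  by apply: cvgM; [exact: cvg_cst | exact: cvg_id].
by move=> t; exact: continuousD (@dc_cont i t) (affine_cont t).
Qed.

Lemma cournot_grad_equicontinuous theta eps i X0 : 0 < X0 ->
  exists w : R -> R, [/\ {for X0, continuous w}, w X0 = 0 & forall X t,
    box l u i t -> `|cournot_grad theta eps i X t - cournot_grad theta eps i X0 t| <= w X].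
Proof.
move=> X0_gt0; pose dpow p X := `|X `^ p - X0 `^ p|.
have dpow_cont p : {for X0, continuous (dpow p)}.
  by apply: cvg_norm; apply: cvgB; [exact: continuous_powR_at | exact: cvg_cst].
exists (fun X => b * dpow sigma X + sigma * b * dpow (sigma - 1) X * u i); split.
- apply: cvgD; first exact: cvgM (cvg_cst _) (dpow_cont sigma).
  exact: cvgM (cvgM (cvg_cst _) (dpow_cont _)) (cvg_cst _).
- by rewrite /dpow !subrr normr0 !mulr0 mul0r addr0.
move=> X t /andP[lt tu].
have -> : cournot_grad theta eps i X t - cournot_grad theta eps i X0 t =
    b * (X `^ sigma - X0 `^ sigma) + sigma * b * (X `^ (sigma - 1) - X0 `^ (sigma - 1)) * t.
  by rewrite /cournot_grad; ring.
apply: le_trans (ler_normD _ _) _.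
rewrite !normrM /dpow (gtr0_norm b_gt0) (gtr0_norm sigma_gt0) lerD2l.
by rewrite ler_wpM2l ?mulr_ge0 ?(ltW b_gt0) ?(ltW sigma_gt0) // ger0_norm // (le_trans (l_ge0 i) lt).
Qed.

Lemma cournot_VI_exists theta eps : 0 <= eps ->
  exists x, solves_VI (box l u) (aggregative (cournot_grad theta eps)) x.
Proof.
move=> eps_ge0.
have eta_Lt : eta <= \sum_(i < N) l i by apply: eta_le => i; rewrite /box /= lexx lu.
apply: (@aggregative_VI_exists _ _ l u _ m) => // [i X _|i X /andP[LtX _]|i X0 /andP[LtX0 _]].
- exact: cournot_grad_continuous.
- exact: (cournot_grad_monotone theta eps_ge0).1 i X (le_trans eta_Lt LtX).
have [|w [w_cont wX0 w_ge]] := cournot_grad_equicontinuous theta eps i (X0 := X0).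
  exact: lt_le_trans eta_gt0 (le_trans eta_Lt LtX0).
by exists w; split=> // X t _; exact: w_ge.
Qed.

Lemma cournot_VI_lipschitz : exists L, forall theta1 theta2 eps1 eps2 x x',
  0 <= eps1 -> 0 <= eps2 ->
  solves_VI (box l u) (aggregative (cournot_grad theta1 eps1)) x ->
  solves_VI (box l u) (aggregative (cournot_grad theta2 eps2)) x' ->
  pdist x x' <= L * (`|theta1 - theta2| + `|eps1 - eps2|).
Proof.
pose U := \sum_(i < N) u i.
exists (2 * (N%:R + U) / m) => th1 th2 e1 e2 x x' e1_ge0 e2_ge0 VIx VIx'.
have := aggregative_VI_stability eta_le (ltW m_gt0) (cournot_grad_monotone th1 e1_ge0)
  (cournot_grad_monotone th2 e2_ge0) (@cournot_grad_perturbation th1 th2 e1 e2) VIx VIx'.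
rewrite big_split /= sumr_const card_ord -mulr_suml -/U => stab.
rewrite mulrAC ler_pdivlMr // mulrC; apply: le_trans stab _.
have U_ge0 : 0 <= U by apply: sumr_ge0 => i _.
have := mulr_ge0 U_ge0 (normr_ge0 (th1 - th2)).
have := mulr_ge0 (ler0n R N) (normr_ge0 (e1 - e2)).
rewrite -mulr_natl; lra.
Qed.

End CournotGame.

Theorem proposition4 (R : realType) (N : nat) (K : 'I_N -> set R)
  (c : 'I_N -> R -> R) (b sigma delta Delta : R) :
  0 < b -> 1 < sigma ->
  (forall i, exists t, K i t) ->
  (forall i, closed (K i)) ->
  (forall i, convex_subset (K i)) ->
  (forall i, bounded_subset (K i)) ->
  (forall i t, K i t -> 0 <= t) ->
  (forall i, convex_on (K i) (c i)) ->
  (forall i t, K i t -> derivable (c i) t 1) ->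
  (forall i, {within K i, continuous (derive1 (c i))}) ->
  (forall i, lipschitz_on_set (K i) (derive1 (c i))) ->
  0 < delta -> delta < Delta ->
  (exists eta : R, 0 < eta /\ forall x, in_prod K x -> eta <= total_output x) ->
  N%:R < (3 * sigma - 1) / (sigma - 1) ->
  (exists xs : R -> @profile R N,
      (forall theta, delta <= theta <= Delta ->
         solves_VI K (cournotF (fun i => (derive1 (c i))) b sigma theta) (xs theta) /\
         (forall y, solves_VI K (cournotF (fun i => (derive1 (c i))) b sigma theta) y ->
            y = xs theta)) /\
      exists L : R, forall theta1 theta2,
        delta <= theta1 <= Delta -> delta <= theta2 <= Delta ->
        pdist (xs theta1) (xs theta2) <= L * `|theta1 - theta2|) /\
  (exists xe : R -> R -> @profile R N,
      (forall theta eps, delta <= theta <= Delta -> 0 < eps ->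
         solves_VI K (add_eps_id (cournotF (fun i => (derive1 (c i))) b sigma theta) eps)
                   (xe theta eps) /\
         (forall y, solves_VI K
                      (add_eps_id (cournotF (fun i => (derive1 (c i))) b sigma theta) eps) y ->
            y = xe theta eps)) /\
      exists L : R, forall theta1 theta2 eps1 eps2,
        delta <= theta1 <= Delta -> delta <= theta2 <= Delta -> 0 < eps1 -> 0 < eps2 ->
        pdist (xe theta1 eps1) (xe theta2 eps2)
          <= L * (`|theta1 - theta2| + `|eps1 - eps2|)).
Proof.
move=> b_gt0 sigma_gt1 Kne Kcl Kcvx Kbd K_ge0 c_cvx c_der dc_cont _ _ _ [eta [eta_gt0 eta_le]] _.
have [l [u [lu eK]]] := box_of_closed_convex_bounded Kne Kcl Kcvx Kbd; subst K.
have l_ge0 i : 0 <= l i by apply: (K_ge0 i); rewrite /box /= lexx lu.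
pose G theta eps := aggregative (cournot_grad c b sigma theta eps).
pose sol theta eps := xget (fun=> 0) (solves_VI (box l u) (G theta eps)).
have solP theta eps : 0 <= eps -> solves_VI (box l u) (G theta eps) (sol theta eps).
  move=> eps_ge0; apply: xgetPex.
  have [x VIx] := cournot_VI_exists lu l_ge0 b_gt0 sigma_gt1 eta_gt0 eta_le c_cvx c_der dc_cont theta eps_ge0.
  by exists x.
have [L sol_lipschitz] := cournot_VI_lipschitz lu l_ge0 b_gt0 sigma_gt1 eta_gt0 eta_le c_cvx c_der.
have sol_unique theta eps y : 0 <= eps -> solves_VI (box l u) (G theta eps) y -> y = sol theta eps.
  move=> eps_ge0 VIy; apply: pdist_le0.
  have := sol_lipschitz _ _ _ _ _ _ eps_ge0 eps_ge0 VIy (solP theta eps eps_ge0).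
  by rewrite !subrr normr0 addr0 mulr0.
split.
- exists (sol^~ 0); split=> [theta _|].
    by rewrite cournotF_aggregative; split=> [|y]; [exact: solP | exact: sol_unique].
  exists L => theta1 theta2 _ _.
  have := sol_lipschitz _ _ _ _ _ _ (lexx 0) (lexx 0) (solP theta1 0 (lexx 0)) (solP theta2 0 (lexx 0)).
  by rewrite subrr normr0 addr0.
- exists sol; split=> [theta eps _ /ltW eps_ge0|].
    by rewrite add_eps_id_cournotF; split=> [|y]; [exact: solP | exact: sol_unique].
  exists L => theta1 theta2 eps1 eps2 _ _ /ltW eps1_ge0 /ltW eps2_ge0.
  exact: sol_lipschitz (solP _ _ eps1_ge0) (solP _ _ eps2_ge0).
Qed.
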